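(* Let $H$ be a real Hilbert space, $I=\{1,\dots,M\}$, let $f_i,h_i,T_i$ ($i\in I$) satisfy Assumption (A1)–(A4) and the parameters satisfy Condition (C) (described below). Consider the sequences generated by the Distributed Accelerated Incremental Algorithm below, and assume that for each $i\in I$ the sequence $\{y^{(i)}_n\}$ is bounded. Then: (a) $\lim_{n\to\infty}\frac{\|x_{n+1}-x_n\|}{\lambda_n}=\lim_{n\to\infty}\|x_{n+1}-x_n\|=0$; (b) for every $\bar x\in S$ and $i\in I$ there exist constants $Q_1,Q_2\ge0$ such that for all $n$, $$\|w^{(i+1)}_n-\bar x\|^2\le\|w^{(i)}_n-\bar x\|^2+\theta_nQ_1+\alpha_nQ_2-(1-\alpha_n)\|T_i(y^{(i)}_n)-y^{(i)}_n\|^2-\|z^{(i)}_n-y^{(i)}_n\|^2+2\lambda_n\big(f_i(\bar x)-f_i(y^{(i)}_n)\big)+2\lambda_n\langle d^{(i)}_{n+1},y^{(i)}_n-\bar x\rangle.$$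
   Context: Assumption (A1): each $f_i:H\to\mathbb{R}$ is continuous and convex. (A2): each $h_i:H\to\mathbb{R}$ is convex and Fréchet differentiable, and $\nabla h_i$ is $(1/L_i)$-Lipschitz continuous for some $L_i>0$. (A3): each $T_i:H\to H$ is firmly nonexpansive, i.e. $\|T_ix-T_iy\|^2\le\langle T_ix-T_iy,x-y\rangle$ for all $x,y$. (A4): $S=\bigcap_{i=1}^M\mathrm{Fix}\,T_i\neq\emptyset$ and, with $\psi=\sum_{i=1}^M(f_i+h_i)$, $\Omega=\{\hat x\in S:\psi(\hat x)=\min_{x\in S}\psi(x)\}\neq\emptyset$. Condition (C): $\{\theta_n\},\{\lambda_n\},\{\beta_n\},\{\alpha_n\}$ are decreasing real sequences converging to $0$ with $\theta_n\in[0,1)$, $\lambda_n\in(0,2\min_{i\in I}L_i]$, $\beta_n\in(0,1]$, $\alpha_n\in(0,1]$, and: (C1) $\sum_n\alpha_n=\infty$; (C2) $\lim_n\frac{1}{\alpha_{n+1}}\big|\frac{1}{\lambda_{n+1}}-\frac{1}{\lambda_n}\big|=0$; (C3) $\lim_n\frac{1}{\lambda_{n+1}}\big|1-\frac{\alpha_n}{\alpha_{n+1}}\big|=0$; (C4) $\lim_n\frac{\alpha_n}{\lambda_n}=0$; (C5) $\lim_n\frac{\theta_n}{\alpha_{n+1}\lambda_{n+1}}=0$; (C6) $\frac{\lambda_n}{\lambda_{n+1}}\le\sigma$ for some $\sigma\ge1$; (C7) $\lim_n\frac{\beta_n}{\alpha_{n+1}}=0$. $\mathrm{prox}_{\lambda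 g}(x)=\arg\min_y\{g(y)+\frac{1}{2\lambda}\|x-y\|^2\}$. Distributed Accelerated Incremental Algorithm: choose $x_1\in H$, $w^{(i)}_0,z^{(i)}_0,u^{(i)}\in H$ and set $d^{(i)}_1=-\nabla h_i(z^{(i)}_0)$ ($i\in I$). For $n=1,2,\dots$: set $w^{(1)}_n=x_n$; for $i=1,\dots,M$ compute $z^{(i)}_n=w^{(i)}_n+\theta_n(w^{(i)}_n-w^{(i)}_{n-1})$, $d^{(i)}_{n+1}=-\nabla h_i(z^{(i)}_n)+\beta_nd^{(i)}_n$, $y^{(i)}_n=\mathrm{prox}_{\lambda_nf_i}(z^{(i)}_n+\lambda_nd^{(i)}_{n+1})$, $w^{(i+1)}_n=\alpha_nu^{(i)}+(1-\alpha_n)T_i(y^{(i)}_n)$; then set $x_{n+1}=w^{(M+1)}_n$. *)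

From HB Require Import structures.
From mathcomp Require Import all_boot all_order all_algebra.
From mathcomp Require Import all_classical all_reals all_analysis.
Set Implicit Arguments. Unset Strict Implicit. Unset Printing Implicit Defensive.
Import Order.TTheory GRing.Theory Num.Theory.
Import numFieldNormedType.Exports.
Local Open Scope classical_set_scope.
Local Open Scope ring_scope.

(* A real Hilbert space is represented by a complete normed space
   H : completeNormedModType R together with a function inner : H -> H -> R
   which is a symmetric bilinear form whose induced norm is the norm of H. *)
Definition is_inner_product (R : realType) (H : normedModType R)
  (inner : H -> H -> R) : Prop :=
  [/\ (forall x y, inner x y = inner y x),
      (forall (a : R) (x y z : H), inner (a *: x + y) z = a * inner x z + inner y z)
    & (forall x, `|x| ^+ 2 = inner x x)].

Definition convex_fun (R : realType) (H : normedModType R) (f : H -> R) : Prop :=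
  forall (x y : H) (t : R), 0 <= t -> t <= 1 ->
    f (t *: x + (1 - t) *: y) <= t * f x + (1 - t) * f y.

(* g is the (Riesz representative of the) Frechet derivative of h :
   h is Frechet differentiable at every x with derivative v |-> <g x, v>. *)
Definition frechet_gradient (R : realType) (H : normedModType R)
  (inner : H -> H -> R) (h : H -> R) (g : H -> H) : Prop :=
  forall x : H, forall eps : R, 0 < eps -> exists2 delta : R, 0 < delta &
    forall v : H, `|v| < delta ->
      `|h (x + v) - h x - inner (g x) v| <= eps * `|v|.

Definition lipschitz_with (R : realType) (H : normedModType R)
  (K : R) (g : H -> H) : Prop :=
  forall x y, `|g x - g y| <= K * `|x - y|.

Definition firmly_nonexpansive (R : realType) (H : normedModType R)
  (inner : H -> H -> R) (T : H -> H) : Prop :=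
  forall x y, `|T x - T y| ^+ 2 <= inner (T x - T y) (x - y).

Definition Fix (R : realType) (H : normedModType R) (T : H -> H) : set H :=
  [set x | T x = x].

Definition is_prox (R : realType) (H : normedModType R)
  (lam : R) (g : H -> R) (x y : H) : Prop :=
  forall z : H, g y + (2 * lam)^-1 * `|x - y| ^+ 2 <= g z + (2 * lam)^-1 * `|x - z| ^+ 2.

From HB Require Import structures.
From mathcomp Require Import all_boot all_order all_algebra.
From mathcomp Require Import all_classical all_reals all_analysis.
From mathcomp Require Import ring lra.
Import Order.TTheory GRing.Theory Num.Theory.
Import numFieldNormedType.Exports.
Local Open Scope classical_set_scope.
Local Open Scope ring_scope.

(* Each incremental step composes an inertial extrapolation, a gradient step
   with memory, a proximal step and a Halpern-type relaxation towards [u i].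
   Once all iterates are bounded, each of these maps is nonexpansive up to an
   error controlled by the increments of the parameters, so that
   [D n = |x (n+1) - x n|] satisfies
   [D (n+1) <= (1 - alpha (n+1)) D n + alpha (n+1) lambda (n+1) eps n]
   with [eps n -> 0] by (C2)-(C7).  Dividing by [lambda (n+1)] and applying
   Xu's lemma (which needs [sum alpha = +oo]) gives [D n / lambda n -> 0], and
   then [D n -> 0] since [lambda n -> 0].
   Part (b) is the one-step estimate: the inertial term costs [theta n Q1], the
   variational inequality of the prox produces the [f] and [d] terms, firm
   nonexpansiveness of [T i] the term [|T i y - y|^2], and the anchor [u i]
   the term [alpha n Q2]. *)

Set Implicit Arguments. Unset Strict Implicit. Unset Printing Implicit Defensive.

Section InnerProduct.
Variables (R : realType) (H : normedModType R) (inner : H -> H -> R).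
Hypothesis inner_prod : is_inner_product inner.

Lemma innerC x y : inner x y = inner y x.
Proof. by case: inner_prod. Qed.

Lemma inner_linear a x y z : inner (a *: x + y) z = a * inner x z + inner y z.
Proof. by case: inner_prod. Qed.

Lemma sqr_norm_inner x : `|x| ^+ 2 = inner x x.
Proof. by case: inner_prod. Qed.

Lemma inner0l z : inner 0 z = 0.
Proof. by have := inner_linear 1 0 0 z; rewrite scaler0 addr0 mul1r; lra. Qed.

Lemma innerDl x y z : inner (x + y) z = inner x z + inner y z.
Proof. by rewrite -[x]scale1r inner_linear mul1r scale1r. Qed.

Lemma innerZl a x z : inner (a *: x) z = a * inner x z.
Proof. by rewrite -[a *: x]addr0 inner_linear inner0l addr0. Qed.

Lemma innerNl x z : inner (- x) z = - inner x z.
Proof. by rewrite -scaleN1r innerZl mulN1r. Qed.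

Lemma innerBl x y z : inner (x - y) z = inner x z - inner y z.
Proof. by rewrite innerDl innerNl. Qed.

Lemma inner0r z : inner z 0 = 0.
Proof. by rewrite innerC inner0l. Qed.

Lemma innerDr x y z : inner z (x + y) = inner z x + inner z y.
Proof. by rewrite innerC innerDl innerC (innerC y). Qed.

Lemma innerZr a x z : inner z (a *: x) = a * inner z x.
Proof. by rewrite innerC innerZl innerC. Qed.

Lemma innerNr x z : inner z (- x) = - inner z x.
Proof. by rewrite innerC innerNl innerC. Qed.

Lemma innerBr x y z : inner z (x - y) = inner z x - inner z y.
Proof. by rewrite innerDr innerNr. Qed.

Lemma sqr_normD x y : `|x + y| ^+ 2 = `|x| ^+ 2 + 2 * inner x y + `|y| ^+ 2.
Proof. by rewrite !sqr_norm_inner innerDl !innerDr (innerC y x); lra. Qed.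

Lemma sqr_normB x y : `|x - y| ^+ 2 = `|x| ^+ 2 - 2 * inner x y + `|y| ^+ 2.
Proof. by rewrite sqr_normD innerNr normrN; lra. Qed.

Lemma sqr_normZ (a : R) (x : H) : `|a *: x| ^+ 2 = a ^+ 2 * `|x| ^+ 2.
Proof. by rewrite normrZ exprMn real_normK ?num_real. Qed.

Lemma inner_le_normM x y : inner x y <= `|x| * `|y|.
Proof.
have [->|x0] := eqVneq x 0; first by rewrite inner0l normr0 mul0r.
have [->|y0] := eqVneq y 0; first by rewrite inner0r normr0 mulr0.
have := sqr_ge0 `| `|y| *: x - `|x| *: y|.
rewrite sqr_normB !sqr_normZ innerZl innerZr => nonneg.
have xy_gt0 : 0 < `|x| * `|y| by rewrite mulr_gt0 // normr_gt0.
by rewrite -(ler_pM2l xy_gt0); nra.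
Qed.

Lemma norm_inner_le_normM x y : `|inner x y| <= `|x| * `|y|.
Proof.
rewrite ler_norml inner_le_normM andbT.
by have := inner_le_normM (- x) y; rewrite innerNl normrN; lra.
Qed.

Lemma sqr_norm_convex (a : R) (x y : H) : 0 <= a <= 1 ->
  `|a *: x + (1 - a) *: y| ^+ 2 <= a * `|x| ^+ 2 + (1 - a) * `|y| ^+ 2.
Proof.
move=> /andP [a_ge0 a_le1].
rewrite sqr_normD !sqr_normZ innerZl innerZr.
have := sqr_normB x y; have := sqr_ge0 `|x - y|.
have : 0 <= a * (1 - a) by rewrite mulr_ge0 // subr_ge0.
nra.
Qed.

End InnerProduct.

Lemma le_of_le_add_small_multiple (R : realFieldType) (a b c : R) :
  (forall t, 0 < t -> t <= 1 -> a <= b + t * c) -> a <= b.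
Proof.
move=> le_abc; apply/ler_addgt0Pr => e e_gt0.
pose t := Num.min 1 (e / (`|c| + 1)).
have t_gt0 : 0 < t by rewrite lt_min ltr01 divr_gt0 // ltr_pwDl.
have t_le_e : t <= e / (`|c| + 1) by rewrite ge_min lexx orbT.
have t_le1 : t <= 1 by rewrite ge_min lexx.
apply: (le_trans (le_abc t t_gt0 t_le1)); rewrite lerD2l.
apply: (le_trans (ler_wpM2l (ltW t_gt0) (ler_norm c))).
apply: (le_trans (ler_wpM2r (normr_ge0 c) t_le_e)).
rewrite mulrAC ler_pdivrMr ?ltr_wpDl // mulrDr mulr1 lerDl; exact: ltW.
Qed.

Lemma scale_convexE (R : realType) (H : normedModType R) (t : R) (p q : H) :
  t *: p + (1 - t) *: q = q + t *: (p - q).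
Proof. by rewrite scalerBl scale1r scalerBr addrCA. Qed.

Lemma normrB_le_double (R : realType) (H : normedModType R) (B : R) (x y : H) :
  `|x| <= B -> `|y| <= B -> `|x - y| <= 2 * B.
Proof. by move=> x_le y_le; apply: le_trans (ler_normB x y) _; lra. Qed.

Lemma normr_convex_le (R : realType) (H : normedModType R) (a B : R) (p q : H) :
  0 <= a <= 1 -> `|p| <= B -> `|q| <= B -> `|a *: p + (1 - a) *: q| <= B.
Proof.
move=> /andP [a_ge0 a_le1] p_le q_le; have a'_ge0 : 0 <= 1 - a by rewrite subr_ge0.
apply: le_trans (ler_normD _ _) _; rewrite !normrZ !ger0_norm //.
by have := ler_wpM2l a_ge0 p_le; have := ler_wpM2l a'_ge0 q_le; lra.
Qed.

Lemma normr_inertial_le (R : realType) (H : normedModType R) (B t : R) (p q : H) :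
  `|p| <= B -> `|q| <= B -> 0 <= t <= 1 -> `|p + t *: (p - q)| <= 3 * B.
Proof.
move=> p_le q_le /andP [t_ge0 t_le1]; apply: le_trans (ler_normD _ _) _.
rewrite normrZ ger0_norm //; have := normrB_le_double p_le q_le.
have := ler_wpM2r (normr_ge0 (p - q)) t_le1; nra.
Qed.

Section ConvexAnalysis.
Variables (R : realType) (H : normedModType R) (inner : H -> H -> R).
Hypothesis inner_prod : is_inner_product inner.

Lemma firmly_nonexpansive_lipschitz T : firmly_nonexpansive inner T ->
  forall a b, `|T a - T b| <= `|a - b|.
Proof.
move=> firmT a b.
have [->|Tab_neq0] := eqVneq (T a - T b) 0; first by rewrite normr0.
have Tab_gt0 : 0 < `|T a - T b| by rewrite normr_gt0.
rewrite -(ler_pM2l Tab_gt0) -expr2.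
exact: le_trans (firmT a b) (inner_le_normM inner_prod _ _).
Qed.

Lemma firmly_nonexpansive_fix T : firmly_nonexpansive inner T ->
  forall a p, T p = p -> `|T a - p| ^+ 2 <= `|a - p| ^+ 2 - `|T a - a| ^+ 2.
Proof.
move=> firmT a p Tp; have := firmT a p; rewrite Tp.
have -> : T a - a = (T a - p) - (a - p) by rewrite opprB addrA subrK.
by rewrite [X in _ <= _ - X](sqr_normB inner_prod); lra.
Qed.

(* Compare the prox objective at [yv] with its value at [yv + t (p - yv)], then let [t -> 0]. *)
Lemma prox_variational_ineq (lam : R) g (a yv : H) :
  0 < lam -> convex_fun g -> is_prox lam g a yv ->
  forall p, inner (a - yv) (p - yv) <= lam * (g p - g yv).
Proof.
move=> lam_gt0 convg prox_yv p.
apply: (@le_of_le_add_small_multiple _ _ _ (`|p - yv| ^+ 2 / 2)) => t t_gt0 t_le1.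
have := prox_yv (t *: p + (1 - t) *: yv).
have := convg p yv t (ltW t_gt0) t_le1.
rewrite scale_convexE opprD addrA [`|a - yv - _| ^+ 2](sqr_normB inner_prod).
rewrite sqr_normZ (innerZr inner_prod).
set c := (2 * lam)^-1; set N := `|p - yv| ^+ 2; set I := inner _ _.
have c_gt0 : 0 < c by rewrite invr_gt0 mulr_gt0.
move=> conv_ineq prox_ineq.
have : t * (2 * c * I) <= t * (g p - g yv + c * t * N) by nra.
rewrite ler_pM2l // => /(ler_wpM2l (ltW lam_gt0)).
have -> : lam * (2 * c * I) = I by rewrite /c; field; rewrite gt_eqF.
have -> : lam * (g p - g yv + c * t * N) = lam * (g p - g yv) + t * (N / 2).
  by rewrite /c; field; rewrite gt_eqF.
done.
Qed.

Section Gradient.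
Variables (h : H -> R) (g : H -> H).
Hypotheses (convh : convex_fun h) (grad_h : frechet_gradient inner h g).

Lemma gradient_ineq a b : inner (g a) (b - a) <= h b - h a.
Proof.
have [/eqP|ba_neq0] := eqVneq (b - a) 0.
  by rewrite subr_eq0 => /eqP ->; rewrite subrr (inner0r inner_prod) subrr.
set v := b - a; have v_gt0 : 0 < `|v| by rewrite normr_gt0.
apply/ler_addgt0Pr => e e_gt0.
have [del del_gt0 diff_h] := grad_h a (divr_gt0 e_gt0 v_gt0).
pose t := Num.min 1 (del / (2 * `|v|)).
have t_gt0 : 0 < t by rewrite lt_min ltr01 divr_gt0 // mulr_gt0.
have tv_small : `|t *: v| < del.
  have t_le : t <= del / (2 * `|v|) by rewrite ge_min lexx orbT.
  rewrite normrZ gtr0_norm // -ltr_pdivlMr // (le_lt_trans t_le) //.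
  by rewrite invfM mulrA ltr_pM2r ?invr_gt0 // gtr_pMr // invf_lt1 ?ltr1n.
have := diff_h _ tv_small; rewrite normrZ gtr0_norm // (innerZr inner_prod).
have -> : e / `|v| * (t * `|v|) = t * e by field; rewrite gt_eqF.
rewrite ler_norml => /andP [diff_ge _].
have t_le1 : t <= 1 by rewrite ge_min lexx.
have := convh b a (ltW t_gt0) t_le1; rewrite scale_convexE -/v => conv_le.
by rewrite -(ler_pM2l t_gt0); nra.
Qed.

Section Lipschitz.
Variable K : R.
Hypotheses (K_gt0 : 0 < K) (lip_g : lipschitz_with K g).

Lemma descent_ineq p q : h q - h p <= inner (g p) (q - p) + K * `|q - p| ^+ 2.
Proof.
have := gradient_ineq q p; rewrite -opprB (innerNr inner_prod).
have := inner_le_normM inner_prod (g q - g p) (q - p); rewrite (innerBl inner_prod).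
have := ler_wpM2r (normr_ge0 (q - p)) (lip_g q p); rewrite -mulrA -expr2.
lra.
Qed.

(* Apply [gradient_ineq] at [p] and [descent_ineq] at [q], both towards
   [q - (2K)^-1 (g q - g p)]. *)
Lemma gradient_ineq_strong p q :
  inner (g p) (q - p) + `|g q - g p| ^+ 2 / (4 * K) <= h q - h p.
Proof.
set s := (2 * K)^-1; set D := g q - g p; set w := q - s *: D.
have := gradient_ineq p w; have := descent_ineq q w.
have -> : w - p = (q - p) - s *: D by rewrite /w addrAC.
have -> : w - q = - (s *: D) by rewrite /w addrAC subrr add0r.
rewrite normrN sqr_normZ (innerNr inner_prod) !(innerZr inner_prod).
rewrite (innerBr inner_prod) (innerZr inner_prod).
have : s * inner (g q) D - s * inner (g p) D = s * `|D| ^+ 2.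
  by rewrite -mulrBr -(innerBl inner_prod) (sqr_norm_inner inner_prod).
have -> : K * (s ^+ 2 * `|D| ^+ 2) = `|D| ^+ 2 / (4 * K) by rewrite /s; field; rewrite gt_eqF.
have -> : s * `|D| ^+ 2 = 2 * (`|D| ^+ 2 / (4 * K)) by rewrite /s; field; rewrite gt_eqF.
lra.
Qed.

Lemma gradient_cocoercive a b :
  `|g a - g b| ^+ 2 <= 2 * K * inner (g a - g b) (a - b).
Proof.
have := gradient_ineq_strong a b; have := gradient_ineq_strong b a.
rewrite -normrN opprB -ler_pdivrMl ?mulr_gt0 //.
rewrite -[b - a]opprB (innerNr inner_prod) (innerBl inner_prod).
have -> : (2 * K)^-1 * `|g b - g a| ^+ 2 =
  `|g b - g a| ^+ 2 / (4 * K) + `|g b - g a| ^+ 2 / (4 * K).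
  by field; rewrite gt_eqF.
lra.
Qed.

Lemma gradient_step_nonexpansive (lam : R) a b : 0 <= lam -> lam * K <= 1 ->
  `|(a - lam *: g a) - (b - lam *: g b)| <= `|a - b|.
Proof.
move=> lam_ge0 lamK_le1.
have -> : (a - lam *: g a) - (b - lam *: g b) = (a - b) - lam *: (g a - g b).
  by rewrite scalerBr !opprD !opprK addrACA.
rewrite -ler_sqr ?nnegrE // (sqr_normB inner_prod) sqr_normZ (innerZr inner_prod).
rewrite (innerC inner_prod (a - b)).
have := gradient_cocoercive a b.
set N := `|g a - g b| ^+ 2; set I := inner (g a - g b) (a - b) => coco.
have I_ge0 : 0 <= I.
  by have := le_trans (sqr_ge0 _) coco; rewrite pmulr_rge0 ?mulr_gt0.
have := ler_wpM2l (sqr_ge0 lam) coco.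
have := ler_wpM2l (mulr_ge0 lam_ge0 I_ge0) lamK_le1.
nra.
Qed.

End Lipschitz.
End Gradient.

(* Add the variational inequalities of [y1] (tested at [y0]) and of [y0]
   (tested at [y1], scaled by [l1 / l0]); the values of [f] cancel. *)
Lemma prox_dist_le (f : H -> R) (l1 l0 : R) (a1 a0 y1 y0 : H) :
  0 < l1 -> 0 < l0 -> convex_fun f -> is_prox l1 f a1 y1 -> is_prox l0 f a0 y0 ->
  `|y1 - y0| <= `|a1 - a0| + `|l0 - l1| / l0 * `|a0 - y0|.
Proof.
move=> l1_gt0 l0_gt0 convf prox1 prox0.
set e := y1 - y0; set r := l1 / l0.
have := prox_variational_ineq l1_gt0 convf prox1 y0.
have -> : y0 - y1 = - e by rewrite opprB.
rewrite (innerNr inner_prod).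
have := prox_variational_ineq l0_gt0 convf prox0 y1; rewrite -/e.
move=> /(ler_wpM2l (divr_ge0 (ltW l1_gt0) (ltW l0_gt0))).
rewrite -/r mulrA divfK ?gt_eqF // => var0 var1.
have key : `|e| ^+ 2 <= inner (a1 - a0) e + (1 - r) * inner (a0 - y0) e.
  have split_a1 : a1 - y1 = (a1 - a0) + (a0 - y0) - e.
    by rewrite /e addrA subrK opprB addrA subrK.
  move: var1; rewrite split_a1 (innerBl inner_prod) (innerDl inner_prod).
  rewrite (sqr_norm_inner inner_prod); lra.
have r_dist : `|1 - r| = `|l0 - l1| / l0.
  rewrite /r -{1}(divff (lt0r_neq0 l0_gt0)) -mulrBl normrM.
  by rewrite (gtr0_norm (x := l0^-1)) ?invr_gt0.
have [->|e_neq0] := eqVneq e 0; first by rewrite normr0 addr_ge0 // mulr_ge0 // divr_ge0 // ltW.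
have e_gt0 : 0 < `|e| by rewrite normr_gt0.
rewrite -r_dist -(ler_pM2r e_gt0) mulrDl -mulrA -expr2.
apply: (le_trans key); apply: lerD; first exact: inner_le_normM.
apply: le_trans (ler_norm _) _; rewrite normrM ler_wpM2l //.
exact: norm_inner_le_normM.
Qed.

End ConvexAnalysis.

Section IncrementalStep.
Variables (R : realType) (H : normedModType R) (inner : H -> H -> R).
Hypothesis inner_prod : is_inner_product inner.

Lemma inertial_dist_le (B t1 t0 : R) (w1 v1 w0 v0 : H) :
  0 <= t1 -> 0 <= t0 -> `|w1| <= B -> `|v1| <= B -> `|w0| <= B -> `|v0| <= B ->
  `|(w1 + t1 *: (w1 - v1)) - (w0 + t0 *: (w0 - v0))| <=
    `|w1 - w0| + 2 * B * (t1 + t0).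
Proof.
move=> t1_ge0 t0_ge0 w1_le v1_le w0_le v0_le.
rewrite opprD addrACA; apply: le_trans (ler_normD _ _) _; rewrite lerD2l.
apply: le_trans (ler_normB _ _) _; rewrite !normrZ !ger0_norm // mulrDr.
by rewrite [2 * B * t1]mulrC [2 * B * t0]mulrC lerD // ler_wpM2l // normrB_le_double.
Qed.

Lemma forward_dist_le (h : H -> R) (g : H -> H) (K Bg Bd : R)
    (l1 l0 b1 b0 : R) (z1 z0 d1 d0 : H) :
  convex_fun h -> frechet_gradient inner h g -> 0 < K -> lipschitz_with K g ->
  0 <= l1 -> l1 * K <= 1 -> 0 <= l0 -> 0 <= b1 -> 0 <= b0 ->
  `|g z0| <= Bg -> `|d1| <= Bd -> `|d0| <= Bd ->
  `|(z1 + l1 *: (- g z1 + b1 *: d1)) - (z0 + l0 *: (- g z0 + b0 *: d0))| <=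
    `|z1 - z0| + `|l0 - l1| * Bg + Bd * (l1 * b1 + l0 * b0).
Proof.
move=> convh grad_h K_gt0 lip_g l1_ge0 l1K_le1 l0_ge0 b1_ge0 b0_ge0 gz0_le d1_le d0_le.
rewrite !scalerDr !scalerN !scalerA !addrA opprD addrACA.
set c1 := z1 - l1 *: g z1; set c2 := z0 - l1 *: g z0; set c3 := z0 - l0 *: g z0.
have -> : c1 - c3 = (c1 - c2) + (c2 - c3) by rewrite addrA subrK.
have -> : c2 - c3 = (l0 - l1) *: g z0.
  by rewrite opprD addrACA subrr add0r opprK addrC scalerBl.
apply: le_trans (ler_normD _ _) _; apply: lerD.
  apply: le_trans (ler_normD _ _) _; apply: lerD.
    exact: (gradient_step_nonexpansive inner_prod convh grad_h K_gt0 lip_g z1 z0 l1_ge0).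
  by rewrite normrZ distrC ler_wpM2l.
apply: le_trans (ler_normB _ _) _; rewrite !normrZ !ger0_norm ?mulr_ge0 //.
by rewrite mulrDr [Bd * _]mulrC [Bd * (_ * _)]mulrC lerD // ler_wpM2l ?mulr_ge0.
Qed.

Lemma relaxation_dist_le T (a1 a0 : R) (u y1 y0 : H) :
  firmly_nonexpansive inner T -> 0 <= a1 <= 1 ->
  `|(a1 *: u + (1 - a1) *: T y1) - (a0 *: u + (1 - a0) *: T y0)| <=
    (1 - a1) * `|y1 - y0| + `|a1 - a0| * `|u - T y0|.
Proof.
move=> firmT /andP [a1_ge0 a1_le1].
apply: le_trans (ler_distD (a1 *: u + (1 - a1) *: T y0) _ _) _; apply: lerD.
  rewrite opprD addrACA subrr add0r -scalerBr normrZ ger0_norm ?subr_ge0 //.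
  by rewrite ler_wpM2l ?subr_ge0 // (firmly_nonexpansive_lipschitz inner_prod).
by rewrite !scale_convexE opprD addrACA subrr add0r -scalerBl normrZ.
Qed.

Lemma inertial_sqr_dist_le (B t : R) (w v p : H) :
  `|w| <= B -> `|v| <= B -> 0 <= t <= 1 ->
  `|w + t *: (w - v) - p| ^+ 2 <=
    `|w - p| ^+ 2 + t * (2 * (B + `|p|) * (2 * B) + (2 * B) ^+ 2).
Proof.
move=> w_le v_le /andP [t_ge0 t_le1].
have B_ge0 : 0 <= B := le_trans (normr_ge0 w) w_le.
rewrite addrAC (sqr_normD inner_prod) sqr_normZ (innerZr inner_prod).
have wp_le : `|w - p| <= B + `|p| by apply: le_trans (ler_normB _ _) _; rewrite lerD2r.
have wv_le := normrB_le_double w_le v_le.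
have := inner_le_normM inner_prod (w - p) (w - v).
have := ler_pM (normr_ge0 _) (normr_ge0 _) wp_le wv_le.
have := ler_pM (sqr_ge0 _) (sqr_ge0 _) (ler_piMr t_ge0 t_le1 : t ^+ 2 <= t)
  (lerXn2r 2 (normr_ge0 _) (le_trans (normr_ge0 _) wv_le) wv_le).
nra.
Qed.

(* The variational inequality of the prox tested at [p], expanded with
   [z - p = (z - y) - (p - y)]. *)
Lemma prox_sqr_dist_le f (lam : R) (z d y p : H) :
  0 < lam -> convex_fun f -> is_prox lam f (z + lam *: d) y ->
  `|y - p| ^+ 2 <= `|z - p| ^+ 2 - `|z - y| ^+ 2
    + 2 * lam * (f p - f y) + 2 * lam * inner d (y - p).
Proof.
move=> lam_gt0 convf prox_y.
have := prox_variational_ineq inner_prod lam_gt0 convf prox_y p.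
rewrite addrAC (innerDl inner_prod) (innerZl inner_prod).
have -> : inner d (p - y) = - inner d (y - p) by rewrite -(innerNr inner_prod) opprB.
have -> : z - p = (z - y) - (p - y) by rewrite opprB addrA subrK.
rewrite [`|z - y - _| ^+ 2](sqr_normB inner_prod) [`|y - p|]distrC; lra.
Qed.

Lemma incremental_step_sqr_dist_le f T (B t lam a : R) (w v z d y u p : H) :
  convex_fun f -> firmly_nonexpansive inner T -> T p = p ->
  `|w| <= B -> `|v| <= B -> 0 <= t <= 1 -> 0 < lam -> 0 <= a <= 1 ->
  z = w + t *: (w - v) -> is_prox lam f (z + lam *: d) y ->
  `|a *: u + (1 - a) *: T y - p| ^+ 2 <=
    `|w - p| ^+ 2 + t * (2 * (B + `|p|) * (2 * B) + (2 * B) ^+ 2)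
    + a * `|u - p| ^+ 2 - (1 - a) * `|T y - y| ^+ 2 - `|z - y| ^+ 2
    + 2 * lam * (f p - f y) + 2 * lam * inner d (y - p).
Proof.
move=> convf firmT Tp w_le v_le t01 lam_gt0 a01 def_z prox_y.
have := inertial_sqr_dist_le p w_le v_le t01; rewrite -def_z.
have := prox_sqr_dist_le p lam_gt0 convf prox_y.
set E := - `|z - y| ^+ 2 + 2 * lam * (f p - f y) + 2 * lam * inner d (y - p).
move=> y_le z_le.
have Ty_le := firmly_nonexpansive_fix inner_prod firmT y Tp.
have := sqr_norm_convex inner_prod (u - p) (T y - p) a01.
have -> : a *: (u - p) + (1 - a) *: (T y - p) = a *: u + (1 - a) *: T y - p.
  by rewrite !scale_convexE opprB addrA subrK addrAC.
have yE_le : `|y - p| ^+ 2 <= `|z - p| ^+ 2 + E by rewrite /E; lra.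
have zE_ge0 : 0 <= `|z - p| ^+ 2 + E := le_trans (sqr_ge0 _) yE_le.
case/andP: a01 => a_ge0 a_le1; have a'_ge0 : 0 <= 1 - a by rewrite subr_ge0.
have := ler_wpM2l a'_ge0 Ty_le.
have := ler_wpM2l a'_ge0 yE_le.
have := mulr_ge0 a_ge0 zE_ge0.
rewrite /E; lra.
Qed.

End IncrementalStep.

Lemma near_forall_range (T : Type) (F : set_system T) (FF : Filter F) (M : nat)
    (P : nat -> T -> Prop) :
  (forall i, (1 <= i <= M)%N -> \forall t \near F, P i t) ->
  \forall t \near F, forall i, (1 <= i <= M)%N -> P i t.
Proof.
move=> ev_P.
have : \forall t \near F, forall i : 'I_M.+1, (1 <= i <= M)%N -> P i t.
  apply: (@filter_forall T 'I_M.+1 (fun i t => (1 <= i <= M)%N -> P i t)) => i.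
  have [/ev_P|_] := boolP (1 <= i <= M)%N; first by apply: filterS.
  by near=> t.
apply: filterS => t Pt i /[dup] /andP [_ i_le]; exact: (Pt (Ordinal (i_le : (i < M.+1)%N))).
Unshelve. all: by end_near.
Qed.

Lemma near_infty_succ (P : set nat) :
  (\forall n \near \oo, P n) -> \forall n \near \oo, P n.+1.
Proof. by case=> N _ P_ge; exists N => // n /leqW /P_ge. Qed.

Section RealSequences.
Variable R : realType.
Implicit Types (a b alpha eps : R^nat).

Lemma nneseries_pinfty_tail_gt alpha N (B : R) :
  (forall n, (1 <= n)%N -> 0 <= alpha n) ->
  (\sum_(1 <= k <oo) (alpha k)%:E = +oo)%E -> (1 <= N)%N ->
  \forall n \near \oo, B < \sum_(N <= k < n) alpha k.
Proof.
move=> alpha_ge0 alpha_dvg N_ge1.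
have [n0 N_le_n0 B_lt] : exists2 n0, (N <= n0)%N & B < \sum_(N <= k < n0) alpha k.
  apply: contrapT => /forall2NP sum_le.
  suff : (\sum_(1 <= k <oo) (alpha k)%:E <= (\sum_(1 <= k < N) alpha k + B)%:E)%E.
    by rewrite alpha_dvg leye_eq.
  apply: (@lime_le _ _ _ _ _ (fun n => \sum_(1 <= k < n) (alpha k)%:E)).
    by apply: is_cvg_nneseries => n n_ge1 _; rewrite lee_fin alpha_ge0.
  near=> n; have N_le_n : (N <= n)%N by near: n; exact: nbhs_infty_ge.
  rewrite sumEFin lee_fin (big_cat_nat N_ge1 N_le_n) lerD2l /=.
  by case: (sum_le n) => // /negP; rewrite -leNgt.
near=> n; have n0_le_n : (n0 <= n)%N by near: n; exact: nbhs_infty_ge.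
apply: (lt_le_trans B_lt); rewrite (big_cat_nat N_le_n0 n0_le_n) lerDl /=.
rewrite big_nat_cond sumr_ge0 // => k /andP [/andP [n0_le_k _] _].
by rewrite alpha_ge0 // (leq_trans N_ge1) // (leq_trans N_le_n0).
Unshelve. all: by end_near.
Qed.

(* [(1 - x) (1 + s + x) <= 1 + s] turns the contraction into a bound by partial sums. *)
Lemma contraction_partial_sum_le b alpha N :
  (forall n, (N < n)%N -> 0 <= alpha n <= 1) -> (forall n, (N <= n)%N -> 0 <= b n) ->
  (forall n, (N <= n)%N -> b n.+1 <= (1 - alpha n.+1) * b n) ->
  forall n, (N <= n)%N -> b n * (1 + \sum_(N.+1 <= k < n.+1) alpha k) <= b N.
Proof.
move=> alpha01 b_ge0 b_rec; elim=> [|n IH].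
  by rewrite leqn0 => /eqP ->; rewrite big_geq // addr0 mulr1.
rewrite leq_eqVlt => /predU1P [<-|N_le_n]; first by rewrite big_geq // addr0 mulr1.
apply: le_trans (IH N_le_n); rewrite big_nat_recr //=.
set S := \sum_(N.+1 <= k < n.+1) alpha k; set x := alpha n.+1.
have /andP [x_ge0 x_le1] : 0 <= x <= 1 by exact: alpha01.
have S_ge0 : 0 <= S.
  rewrite /S big_nat_cond sumr_ge0 // => k /andP [/andP [N_lt_k _] _].
  by case/andP: (alpha01 k N_lt_k).
have := ler_wpM2r (addr_ge0 ler01 (addr_ge0 S_ge0 x_ge0)) (b_rec n N_le_n).
have := mulr_ge0 (b_ge0 n N_le_n) (addr_ge0 (mulr_ge0 x_ge0 S_ge0) (sqr_ge0 x)).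
rewrite -/x; lra.
Qed.

Lemma xu_cvg0 a alpha eps :
  (forall n, (1 <= n)%N -> 0 <= alpha n <= 1) ->
  (\sum_(1 <= k <oo) (alpha k)%:E = +oo)%E -> eps @ \oo --> 0 ->
  (\forall n \near \oo,
     0 <= a n /\ a n.+1 <= (1 - alpha n.+1) * a n + alpha n.+1 * eps n) ->
  a @ \oo --> 0.
Proof.
move=> alpha01 alpha_dvg eps_cvg0 a_rec; apply/cvgrPdist_le => e e_gt0.
have e2_gt0 : 0 < e / 2 by rewrite divr_gt0.
have [N _ ev_N] : \forall n \near \oo,
    [/\ (1 <= n)%N, 0 <= a n, a n.+1 <= (1 - alpha n.+1) * a n + alpha n.+1 * eps n
      & eps n <= e / 2].
  near=> n; have [a_ge0 rec_n] :
      0 <= a n /\ a n.+1 <= (1 - alpha n.+1) * a n + alpha n.+1 * eps n by near: n.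
  split => //; first by near: n; exact: nbhs_infty_ge.
  by apply: le_trans (ler_norm _) _; near: n; exact: cvgr0_norm_le.
pose b n := Num.max (a n - e / 2) 0.
have b_ge0 n : 0 <= b n by rewrite le_max lexx orbT.
have b_rec n : (N <= n)%N -> b n.+1 <= (1 - alpha n.+1) * b n.
  move=> N_le_n; have [n_ge1 a_ge0 rec_n eps_le] := ev_N n N_le_n.
  have /andP [x_ge0 x_le1] := alpha01 n.+1 isT.
  rewrite ge_max mulr_ge0 ?subr_ge0 // andbT.
  apply: le_trans (_ : (1 - alpha n.+1) * (a n - e / 2) <= _).
    by have := ler_wpM2l x_ge0 eps_le; lra.
  by rewrite ler_wpM2l ?subr_ge0 // le_max lexx.
have N_ge1 : (1 <= N)%N by have [] := ev_N N (leqnn N).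
have alpha_ge0 n : (1 <= n)%N -> 0 <= alpha n by case/alpha01/andP.
have [N' _ ev_N'] := nneseries_pinfty_tail_gt (b N / (e / 2)) alpha_ge0 alpha_dvg
  (leqW N_ge1 : (1 <= N.+1)%N).
near=> m; have N_le_m : (N <= m)%N by near: m; exact: nbhs_infty_ge.
have N'_le_m : (N' <= m.+1)%N by apply: leqW; near: m; exact: nbhs_infty_ge.
pose S := \sum_(N.+1 <= k < m.+1) alpha k.
have := ev_N' _ N'_le_m; rewrite -/S ltr_pdivrMr // => S_gt.
have := contraction_partial_sum_le (fun n N_lt_n => alpha01 n (leq_ltn_trans (leq0n N) N_lt_n))
  (fun n _ => b_ge0 n) b_rec N_le_m; rewrite -/S => bS_le.
have S_gt0 : 0 < S by have := le_lt_trans (b_ge0 N) S_gt; rewrite pmulr_lgt0.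
have bm_le : b m <= e / 2.
  rewrite leNgt; apply/negP => e2_lt.
  by have := b_ge0 m; have := e2_lt; rewrite -(ltr_pM2l S_gt0) mulrC; lra.
have [_ a_ge0 _ _] := ev_N m N_le_m.
have : a m - e / 2 <= b m by rewrite le_max lexx.
by rewrite sub0r normrN ger0_norm //; lra.
Unshelve. all: by end_near.
Qed.

Lemma iter_contraction_le (D : R^nat) (c e : R) (M : nat) :
  0 <= c <= 1 -> 0 <= e -> (0 < M)%N -> (forall i, (i <= M)%N -> 0 <= D i) ->
  (forall i, (i < M)%N -> D i.+1 <= c * D i + e) ->
  D M <= c * D 0 + M%:R * e.
Proof.
move=> /andP [c_ge0 c_le1] e_ge0 M_gt0 D_ge0 D_rec.
suff : forall i, (0 < i <= M)%N -> D i <= c * D 0 + i%:R * e by apply; rewrite M_gt0 leqnn.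
elim=> [//|[|i] IH] /andP [_ i_lt]; first by rewrite mulr1n mul1r; exact: D_rec.
apply: le_trans (D_rec i.+1 i_lt) _; rewrite -natr1 mulrDl mul1r addrA lerD2r.
by apply: le_trans (IH (ltnW i_lt)); rewrite ler_piMl // D_ge0 // ltnW.
Qed.

End RealSequences.

Section StepSizeAlgebra.
Variable R : realType.

(* [D1 <= (1 - a) D + a l1 e] divided by [l1], with [1 / l1 = 1 / l + (1 / l1 - 1 / l)]. *)
Lemma div_step_le (D1 D l1 l a B e : R) :
  0 < l1 -> 0 < l -> 0 < a <= 1 -> 0 <= D <= B ->
  D1 <= (1 - a) * D + a * l1 * e ->
  D1 / l1 <= (1 - a) * (D / l) + a * (B * (a^-1 * `|l1^-1 - l^-1|) + e).
Proof.
move=> l1_gt0 l_gt0 /andP [a_gt0 a_le1] /andP [D_ge0 D_le] D1_le.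
have -> : a * (B * (a^-1 * `|l1^-1 - l^-1|) + e) = B * `|l1^-1 - l^-1| + a * e.
  by field; rewrite gt_eqF.
have D1_div : D1 / l1 <= (1 - a) * D / l1 + a * e.
  rewrite ler_pdivrMr // (le_trans D1_le) //.
  suff -> : ((1 - a) * D / l1 + a * e) * l1 = (1 - a) * D + a * l1 * e by [].
  by field; rewrite gt_eqF.
have split_div : (1 - a) * D / l1 = (1 - a) * (D / l) + (1 - a) * D * (l1^-1 - l^-1).
  by field; rewrite !gt_eqF.
rewrite split_div in D1_div.
have : (1 - a) * D * (l1^-1 - l^-1) <= B * `|l1^-1 - l^-1|.
  have a'_ge0 : 0 <= 1 - a by lra.
  have a'_le1 : 1 - a <= 1 by lra.
  apply: le_trans (ler_norm _) _; rewrite normrM ler_wpM2r // ger0_norm ?mulr_ge0 //.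
  by rewrite (le_trans _ D_le) // ler_piMl.
lra.
Qed.

Lemma stage_error_le (a1 a0 t1 t0 l1 l0 b1 b0 s : R) :
  0 < a1 -> 0 < l1 -> 0 < l0 -> 0 <= t1 <= t0 -> 0 <= b1 <= b0 -> l0 / l1 <= s ->
  2 * (t1 + t0) + `|l0 - l1| + (l1 * b1 + l0 * b0) + `|l0 - l1| / l0 + `|a1 - a0| <=
  a1 * l1 * (l1^-1 * `|1 - a0 / a1| + 4 * (t0 / (a1 * l1))
    + (1 + l0) * (a1^-1 * `|l1^-1 - l0^-1|) + (1 + s) * (b0 / a1)).
Proof.
move=> a1_gt0 l1_gt0 l0_gt0 /andP [t1_ge0 t1_le] /andP [b1_ge0 b1_le] ratio_le.
have dist_l : `|l0 - l1| = a1 * l1 * (l0 * (a1^-1 * `|l1^-1 - l0^-1|)).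
  have -> : a1 * l1 * (l0 * (a1^-1 * `|l1^-1 - l0^-1|)) = l1 * l0 * `|l1^-1 - l0^-1|.
    by field; rewrite gt_eqF.
  rewrite -(gtr0_norm (mulr_gt0 l1_gt0 l0_gt0)) -normrM.
  by congr `|_|; field; rewrite !gt_eqF.
have dist_a : `|a1 - a0| = a1 * l1 * (l1^-1 * `|1 - a0 / a1|).
  have -> : a1 * l1 * (l1^-1 * `|1 - a0 / a1|) = `|a1 * (1 - a0 / a1)|.
    by rewrite normrM gtr0_norm //; field; rewrite gt_eqF.
  by congr `|_|; field; rewrite gt_eqF.
have ratio : `|l0 - l1| / l0 = a1 * l1 * (a1^-1 * `|l1^-1 - l0^-1|).
  by rewrite dist_l; field; rewrite !gt_eqF.
have theta_le : 2 * (t1 + t0) <= a1 * l1 * (4 * (t0 / (a1 * l1))).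
  have -> : a1 * l1 * (4 * (t0 / (a1 * l1))) = 4 * t0 by field; rewrite !gt_eqF.
  lra.
have beta_le : l1 * b1 + l0 * b0 <= a1 * l1 * ((1 + s) * (b0 / a1)).
  have -> : a1 * l1 * ((1 + s) * (b0 / a1)) = l1 * b0 + s * l1 * b0.
    by field; rewrite gt_eqF.
  have l0_le : l0 <= s * l1 by rewrite -ler_pdivrMr.
  have := ler_wpM2r (le_trans b1_ge0 b1_le) l0_le.
  have := ler_wpM2l (ltW l1_gt0) b1_le; lra.
rewrite ratio dist_a dist_l; lra.
Qed.

End StepSizeAlgebra.

Section Algorithm.
Variables (R : realType) (H : normedModType R) (inner : H -> H -> R) (M : nat).
Variables (f h : nat -> H -> R) (gradh : nat -> H -> H) (L : nat -> R) (T : nat -> H -> H).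
Variables (theta lambda beta alpha : nat -> R) (sigma : R).
Variables (x : nat -> H) (w z d y : nat -> nat -> H) (u : nat -> H).
Hypotheses (inner_prod : is_inner_product inner) (M_gt0 : (0 < M)%N).
Hypothesis f_convex : forall i, (1 <= i <= M)%N -> convex_fun (f i).
Hypothesis h_smooth : forall i, (1 <= i <= M)%N ->
  [/\ convex_fun (h i), frechet_gradient inner (h i) (gradh i),
      0 < L i & lipschitz_with (L i)^-1 (gradh i)].
Hypothesis T_firm : forall i, (1 <= i <= M)%N -> firmly_nonexpansive inner (T i).
Hypothesis params_decr : forall n, (1 <= n)%N ->
  [/\ theta n.+1 <= theta n, lambda n.+1 <= lambda n,
      beta n.+1 <= beta n & alpha n.+1 <= alpha n].
Hypotheses (lambda_cvg0 : lambda @ \oo --> 0) (beta_cvg0 : beta @ \oo --> 0).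
Hypothesis params_range : forall n, (1 <= n)%N ->
  [/\ 0 <= theta n < 1,
      0 < lambda n /\ (forall i, (1 <= i <= M)%N -> lambda n <= 2 * L i),
      0 < beta n <= 1 & 0 < alpha n <= 1].
Hypothesis alpha_dvg : (\sum_(1 <= k <oo) (alpha k)%:E = +oo)%E.
Hypothesis lambda_inv_rate :
  (fun n => (alpha n.+1)^-1 * `|(lambda n.+1)^-1 - (lambda n)^-1|) @ \oo --> 0.
Hypothesis alpha_ratio_rate :
  (fun n => (lambda n.+1)^-1 * `|1 - alpha n / alpha n.+1|) @ \oo --> 0.
Hypothesis theta_rate : (fun n => theta n / (alpha n.+1 * lambda n.+1)) @ \oo --> 0.
Hypothesis lambda_ratio_le : forall n, (1 <= n)%N -> lambda n / lambda n.+1 <= sigma.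
Hypothesis beta_rate : (fun n => beta n / alpha n.+1) @ \oo --> 0.
Hypothesis w_first : forall n, (1 <= n)%N -> w 1%N n = x n.
Hypothesis algorithm_step : forall n i, (1 <= n)%N -> (1 <= i <= M)%N ->
  [/\ z i n = w i n + theta n *: (w i n - w i n.-1),
      d i n.+1 = - gradh i (z i n) + beta n *: d i n,
      is_prox (lambda n) (f i) (z i n + lambda n *: d i n.+1) (y i n)
    & w i.+1 n = alpha n *: u i + (1 - alpha n) *: T i (y i n)].
Hypothesis x_next : forall n, (1 <= n)%N -> x n.+1 = w M.+1 n.
Hypothesis y_bounded : forall i, (1 <= i <= M)%N ->
  exists B : R, forall n, (1 <= n)%N -> `|y i n| <= B.

Let theta01 n : (1 <= n)%N -> 0 <= theta n <= 1.
Proof. by case/params_range => /andP [-> /ltW]. Qed.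

Let lambda_gt0 n : (1 <= n)%N -> 0 < lambda n.
Proof. by case/params_range => _ []. Qed.

Let beta_ge0 n : (1 <= n)%N -> 0 <= beta n.
Proof. by case/params_range => _ _ /andP [/ltW]. Qed.

Let alpha_gt0 n : (1 <= n)%N -> 0 < alpha n.
Proof. by case/params_range => _ _ _ /andP []. Qed.

Let alpha01 n : (1 <= n)%N -> 0 <= alpha n <= 1.
Proof. by case/params_range => _ _ _ /andP [/ltW ->]. Qed.

Let pinfty_ge (c : R) : \forall B \near +oo, c <= B.
Proof. exact: nbhs_pinfty_ge (num_real c). Qed.

(* Bounds are stated as [\forall B \near +oo, _] so that finitely many of them
   are met by one common [B]. *)
Lemma y_uniformly_bounded : \forall B \near +oo,
  forall i, (1 <= i <= M)%N -> forall n, (1 <= n)%N -> `|y i n| <= B.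
Proof.
apply: near_forall_range => i /y_bounded [By y_le].
near=> B => n n_ge1; apply: le_trans (y_le n n_ge1) _; near: B; exact: pinfty_ge.
Unshelve. all: by end_near.
Qed.

Lemma Ty_uniformly_bounded : \forall B \near +oo,
  forall i, (1 <= i <= M)%N -> forall n, (1 <= n)%N -> `|T i (y i n)| <= B.
Proof.
near +oo_R => By.
have y_le : forall i, (1 <= i <= M)%N -> forall n, (1 <= n)%N -> `|y i n| <= By.
  by near: By; exact: y_uniformly_bounded.
apply: near_forall_range => i i_range; near=> B => n n_ge1.
have := firmly_nonexpansive_lipschitz inner_prod (T_firm i_range) (y i n) 0.
have := ler_normD (T i (y i n) - T i 0) (T i 0); rewrite subrK subr0.
have : By + `|T i 0| <= B by near: B; exact: pinfty_ge.
have := y_le i i_range n n_ge1; lra.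
Unshelve. all: by end_near.
Qed.

Lemma w_uniformly_bounded : \forall B \near +oo,
  forall i, (1 <= i <= M.+1)%N -> forall n, `|w i n| <= B.
Proof.
have w_succ : \forall B \near +oo, forall i, (1 <= i <= M)%N -> forall n, `|w i.+1 n| <= B.
  near +oo_R => C.
  have Ty_le : forall i, (1 <= i <= M)%N -> forall n, (1 <= n)%N -> `|T i (y i n)| <= C.
    by near: C; exact: Ty_uniformly_bounded.
  apply: near_forall_range => i i_range; near=> B.
  have C_le : C <= B by near: B; exact: pinfty_ge.
  have u_le : `|u i| <= B by near: B; exact: pinfty_ge.
  case=> [|n]; first by near: B; exact: pinfty_ge.
  have [_ _ _ ->] := @algorithm_step n.+1 i isT i_range.
  exact: normr_convex_le (alpha01 _) u_le (le_trans (Ty_le i i_range n.+1 isT) C_le).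
near=> B; have w_le : forall i, (1 <= i <= M)%N -> forall n, `|w i.+1 n| <= B.
  by near: B; exact: w_succ.
have M_range : (1 <= M <= M)%N by rewrite M_gt0 leqnn.
move=> [//|[_|i /andP [_ i_le]]] n; last exact: w_le.
case: n => [|[|n]]; first by near: B; exact: pinfty_ge.
  by rewrite w_first //; near: B; exact: pinfty_ge.
by rewrite w_first // x_next //; exact: w_le.
Unshelve. all: by end_near.
Qed.

Lemma sqr_dist_step_le p : (forall i, (1 <= i <= M)%N -> T i p = p) ->
  forall i, (1 <= i <= M)%N -> exists Q1 Q2 : R, [/\ 0 <= Q1, 0 <= Q2 &
    forall n, (1 <= n)%N ->
      `|w i.+1 n - p| ^+ 2 <=
        `|w i n - p| ^+ 2 + theta n * Q1 + alpha n * Q2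
        - (1 - alpha n) * `|T i (y i n) - y i n| ^+ 2
        - `|z i n - y i n| ^+ 2
        + 2 * lambda n * (f i p - f i (y i n))
        + 2 * lambda n * inner (d i n.+1) (y i n - p)].
Proof.
move=> Tp i i_range; near +oo_R => B.
have w_le : forall i, (1 <= i <= M.+1)%N -> forall n, `|w i n| <= B.
  by near: B; exact: w_uniformly_bounded.
have i_range' : (1 <= i <= M.+1)%N by case/andP: i_range => -> /leqW.
have B_ge0 : 0 <= B := le_trans (normr_ge0 _) (w_le i i_range' 0%N).
exists (2 * (B + `|p|) * (2 * B) + (2 * B) ^+ 2), (`|u i - p| ^+ 2).
split; [by rewrite addr_ge0 ?sqr_ge0 // !mulr_ge0 // addr_ge0 | exact: sqr_ge0 |].
move=> n n_ge1; have [def_z _ prox_y ->] := @algorithm_step n i n_ge1 i_range.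
exact: (incremental_step_sqr_dist_le inner_prod (u i) (f_convex i_range) (T_firm i_range)
  (Tp i i_range) (w_le i i_range' n) (w_le i i_range' n.-1) (theta01 n_ge1)
  (lambda_gt0 n_ge1) (alpha01 n_ge1) def_z prox_y).
Unshelve. all: by end_near.
Qed.

Lemma z_uniformly_bounded : \forall B \near +oo,
  forall i, (1 <= i <= M)%N -> forall n, (1 <= n)%N -> `|z i n| <= B.
Proof.
near +oo_R => C.
have w_le : forall i, (1 <= i <= M.+1)%N -> forall n, `|w i n| <= C.
  by near: C; exact: w_uniformly_bounded.
near=> B => i /[dup] i_range /andP [i_ge1 i_le] n n_ge1.
have [-> _ _ _] := @algorithm_step n i n_ge1 i_range.
have i_range' : (1 <= i <= M.+1)%N by rewrite i_ge1 leqW.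
apply: le_trans (normr_inertial_le (w_le i i_range' n) (w_le i i_range' n.-1) (theta01 n_ge1)) _.
by near: B; exact: pinfty_ge.
Unshelve. all: by end_near.
Qed.

Lemma gradient_uniformly_bounded : \forall B \near +oo,
  forall i, (1 <= i <= M)%N -> forall n, (1 <= n)%N -> `|gradh i (z i n)| <= B.
Proof.
near +oo_R => C.
have z_le : forall i, (1 <= i <= M)%N -> forall n, (1 <= n)%N -> `|z i n| <= C.
  by near: C; exact: z_uniformly_bounded.
apply: near_forall_range => i i_range; have [_ _ L_gt0 lip] := h_smooth i_range.
near=> B => n n_ge1; have := lip (z i n) 0; rewrite subr0.
have := ler_normD (gradh i (z i n) - gradh i 0) (gradh i 0); rewrite subrK.
have Linv_ge0 : 0 <= (L i)^-1 by rewrite invr_ge0 ltW.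
have := ler_wpM2l Linv_ge0 (z_le i i_range n n_ge1).
have : (L i)^-1 * C + `|gradh i 0| <= B by near: B; exact: pinfty_ge.
lra.
Unshelve. all: by end_near.
Qed.

(* Once [beta <= 1/2], the recursion [d' = - g + beta d] keeps [|d| <= B] whenever [2 |g| <= B]. *)
Lemma d_eventually_bounded : \forall B \near +oo, \forall n \near \oo,
  forall i, (1 <= i <= M)%N -> `|d i n| <= B.
Proof.
near +oo_R => G.
have g_le : forall i, (1 <= i <= M)%N -> forall n, (1 <= n)%N -> `|gradh i (z i n)| <= G.
  by near: G; exact: gradient_uniformly_bounded.
have [N _ beta_small] : \forall n \near \oo, (1 <= n)%N /\ beta n <= 2^-1.
  near=> n; split; first by near: n; exact: nbhs_infty_ge.
  by apply: le_trans (ler_norm _) _; near: n; apply: cvgr0_norm_le; rewrite ?invr_gt0.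
near=> B.
have dN_le : forall i, (1 <= i <= M)%N -> `|d i N| <= B.
  by near: B; apply: near_forall_range => i _; exact: pinfty_ge.
have G_le : 2 * G <= B by near: B; exact: pinfty_ge.
near=> n => i i_range; have N_le_n : (N <= n)%N by near: n; exact: nbhs_infty_ge.
rewrite -(subnKC N_le_n); elim: (n - N)%N => [|k IH]; first by rewrite addn0 dN_le.
have [k_ge1 beta_le] := beta_small (N + k)%N (leq_addr _ _).
rewrite addnS; have [_ -> _ _] := @algorithm_step (N + k)%N i k_ge1 i_range.
apply: le_trans (ler_normD _ _) _; rewrite normrN normrZ ger0_norm ?beta_ge0 //.
have := g_le i i_range _ k_ge1; have := ler_pM (beta_ge0 k_ge1) (normr_ge0 _) beta_le IH.
lra.
Unshelve. all: by end_near.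
Qed.

Lemma lambda_eventually_small : \forall n \near \oo,
  lambda n <= 1 /\ forall i, (1 <= i <= M)%N -> lambda n * (L i)^-1 <= 1.
Proof.
have lambda_small c : 0 < c -> \forall n \near \oo, lambda n <= c.
  by move=> c_gt0; near=> n; apply: le_trans (ler_norm _) _; near: n; exact: cvgr0_norm_le.
near=> n; split; first by near: n; exact: lambda_small.
near: n; apply: near_forall_range => i i_range; have [_ _ L_gt0 _] := h_smooth i_range.
by near=> n; rewrite ler_pdivrMr // mul1r; near: n; exact: lambda_small.
Unshelve. all: by end_near.
Qed.

Let prox_err n := 2 * (theta n.+1 + theta n) + `|lambda n - lambda n.+1|
  + (lambda n.+1 * beta n.+1 + lambda n * beta n) + `|lambda n - lambda n.+1| / lambda n.

Let stage_err n := prox_err n + `|alpha n.+1 - alpha n|.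

Let prox_err_ge0 n : (1 <= n)%N -> 0 <= prox_err n.
Proof.
move=> n_ge1; have n1_ge1 : (1 <= n.+1)%N by [].
have /andP [t1_ge0 _] := theta01 n1_ge1; have /andP [t0_ge0 _] := theta01 n_ge1.
have := mulr_ge0 (ltW (lambda_gt0 n1_ge1)) (beta_ge0 n1_ge1).
have := mulr_ge0 (ltW (lambda_gt0 n_ge1)) (beta_ge0 n_ge1).
have := divr_ge0 (normr_ge0 (lambda n - lambda n.+1)) (ltW (lambda_gt0 n_ge1)).
have := normr_ge0 (lambda n - lambda n.+1); rewrite /prox_err; lra.
Qed.

Let stage_err_ge0 n : (1 <= n)%N -> 0 <= stage_err n.
Proof. by move=> n_ge1; rewrite addr_ge0 ?prox_err_ge0. Qed.

(* Inertia, forward step and prox each add one error term. *)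
Lemma y_step_le_at (C : R) n i : (1 <= n)%N -> (1 <= i <= M)%N ->
  (forall k, `|w i k| <= C) -> `|gradh i (z i n)| <= C ->
  `|d i n| <= C -> `|d i n.+1| <= C -> `|z i n| <= C -> `|y i n| <= C ->
  lambda n <= 1 -> lambda n.+1 * (L i)^-1 <= 1 ->
  `|y i n.+1 - y i n| <= `|w i n.+1 - w i n| + 3 * C * prox_err n.
Proof.
move=> n_ge1 i_range w_le g_le dn_le dn1_le z_le y_le lam_le1 lamL_le1.
have n1_ge1 : (1 <= n.+1)%N by [].
have [z1 d2 prox1 _] := @algorithm_step n.+1 i n1_ge1 i_range.
have [z0 d1 prox0 _] := @algorithm_step n i n_ge1 i_range.
have [convh grad_h L_gt0 lip] := h_smooth i_range.
have C_ge0 : 0 <= C := le_trans (normr_ge0 _) y_le.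
have /andP [t1_ge0 _] := theta01 n1_ge1; have /andP [t0_ge0 _] := theta01 n_ge1.
have lam1_gt0 := lambda_gt0 n1_ge1; have lam0_gt0 := lambda_gt0 n_ge1.
have z_dist : `|z i n.+1 - z i n| <= `|w i n.+1 - w i n| + 2 * C * (theta n.+1 + theta n).
  by rewrite z1 z0; apply: inertial_dist_le.
have A_dist : `|(z i n.+1 + lambda n.+1 *: d i n.+2) - (z i n + lambda n *: d i n.+1)| <=
    `|z i n.+1 - z i n| + `|lambda n - lambda n.+1| * C
    + C * (lambda n.+1 * beta n.+1 + lambda n * beta n).
  have Linv_gt0 : 0 < (L i)^-1 by rewrite invr_gt0.
  rewrite d2 {2}d1; exact: (forward_dist_le inner_prod (z i n.+1) convh grad_h Linv_gt0 lip
    (ltW lam1_gt0) lamL_le1 (ltW lam0_gt0) (beta_ge0 n1_ge1) (beta_ge0 n_ge1) g_le dn1_le dn_le).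
have Ay_le : `|z i n + lambda n *: d i n.+1 - y i n| <= 3 * C.
  apply: le_trans (ler_normB _ _) _; apply: le_trans (lerD (ler_normD _ _) (lexx _)) _.
  rewrite normrZ gtr0_norm //.
  by have := ler_pM (ltW lam0_gt0) (normr_ge0 _) lam_le1 dn1_le; lra.
have ratio_ge0 : 0 <= `|lambda n - lambda n.+1| / lambda n by rewrite divr_ge0 // ltW.
have := prox_dist_le inner_prod lam1_gt0 lam0_gt0 (f_convex i_range) prox1 prox0.
have := ler_wpM2l ratio_ge0 Ay_le.
have := mulr_ge0 C_ge0 (addr_ge0 t1_ge0 t0_ge0).
have := mulr_ge0 (normr_ge0 (lambda n - lambda n.+1)) C_ge0.
have := mulr_ge0 C_ge0 (addr_ge0 (mulr_ge0 (ltW lam1_gt0) (beta_ge0 n1_ge1))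
  (mulr_ge0 (ltW lam0_gt0) (beta_ge0 n_ge1))).
rewrite /prox_err; lra.
Qed.

Lemma w_step_le_at (C : R) n i : (1 <= n)%N -> (1 <= i <= M)%N ->
  `|y i n.+1 - y i n| <= `|w i n.+1 - w i n| + 3 * C * prox_err n ->
  `|T i (y i n)| <= C -> `|u i| <= C ->
  `|w i.+1 n.+1 - w i.+1 n| <= (1 - alpha n.+1) * `|w i n.+1 - w i n| + 3 * C * stage_err n.
Proof.
move=> n_ge1 i_range y_dist Ty_le u_le; have n1_ge1 : (1 <= n.+1)%N by [].
have [_ _ _ w1] := @algorithm_step n.+1 i n1_ge1 i_range.
have [_ _ _ w0] := @algorithm_step n i n_ge1 i_range.
have C_ge0 : 0 <= C := le_trans (normr_ge0 _) u_le.
have /andP [a_ge0 a_le1] := alpha01 n1_ge1.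
have a'_ge0 : 0 <= 1 - alpha n.+1 by rewrite subr_ge0.
have := relaxation_dist_le inner_prod (alpha n) (u i) (y i n.+1) (y i n) (T_firm i_range)
  (alpha01 n1_ge1); rewrite -w1 -w0.
have := ler_wpM2l (normr_ge0 (alpha n.+1 - alpha n)) (normrB_le_double u_le Ty_le).
have := ler_wpM2l a'_ge0 y_dist.
have := mulr_ge0 a_ge0 (mulr_ge0 (mulr_ge0 (ler0n _ 3) C_ge0) (prox_err_ge0 n_ge1)).
have := mulr_ge0 C_ge0 (normr_ge0 (alpha n.+1 - alpha n)).
rewrite /stage_err; lra.
Qed.

Lemma w_step_le : \forall B \near +oo, \forall n \near \oo, forall i, (1 <= i <= M)%N ->
  `|w i.+1 n.+1 - w i.+1 n| <= (1 - alpha n.+1) * `|w i n.+1 - w i n| + B * stage_err n.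
Proof.
near +oo_R => C.
have w_le : forall i, (1 <= i <= M.+1)%N -> forall k, `|w i k| <= C.
  by near: C; exact: w_uniformly_bounded.
have z_le : forall i, (1 <= i <= M)%N -> forall n, (1 <= n)%N -> `|z i n| <= C.
  by near: C; exact: z_uniformly_bounded.
have g_le : forall i, (1 <= i <= M)%N -> forall n, (1 <= n)%N -> `|gradh i (z i n)| <= C.
  by near: C; exact: gradient_uniformly_bounded.
have y_le : forall i, (1 <= i <= M)%N -> forall n, (1 <= n)%N -> `|y i n| <= C.
  by near: C; exact: y_uniformly_bounded.
have Ty_le : forall i, (1 <= i <= M)%N -> forall n, (1 <= n)%N -> `|T i (y i n)| <= C.
  by near: C; exact: Ty_uniformly_bounded.
have u_le : forall i, (1 <= i <= M)%N -> `|u i| <= C.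
  by near: C; apply: near_forall_range => i _; exact: pinfty_ge.
have d_le : \forall n \near \oo, forall i, (1 <= i <= M)%N -> `|d i n| <= C.
  by near: C; exact: d_eventually_bounded.
near=> B; have C_le : 3 * C <= B by near: B; exact: pinfty_ge.
near=> n; have n_ge1 : (1 <= n)%N by near: n; exact: nbhs_infty_ge.
have dn_le : forall i, (1 <= i <= M)%N -> `|d i n| <= C by near: n.
have dn1_le : forall i, (1 <= i <= M)%N -> `|d i n.+1| <= C.
  by near: n; exact: near_infty_succ d_le.
have lam_le1 : lambda n <= 1.
  by near: n; move: lambda_eventually_small; apply: filterS => ? [].
have lamL_le1 : forall i, (1 <= i <= M)%N -> lambda n.+1 * (L i)^-1 <= 1.
  by near: n; move: (near_infty_succ lambda_eventually_small); apply: filterS => ? [].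
move=> i i_range; have i_range' : (1 <= i <= M.+1)%N by case/andP: i_range => -> /leqW.
have y_step := y_step_le_at n_ge1 i_range (w_le i i_range') (g_le i i_range n n_ge1)
  (dn_le i i_range) (dn1_le i i_range) (z_le i i_range n n_ge1) (y_le i i_range n n_ge1)
  lam_le1 (lamL_le1 i i_range).
apply: le_trans (w_step_le_at n_ge1 i_range y_step (Ty_le i i_range n n_ge1) (u_le i i_range)) _.
by rewrite lerD2l ler_wpM2r ?stage_err_ge0.
Unshelve. all: by end_near.
Qed.

Lemma x_step_le : \forall B \near +oo, \forall n \near \oo,
  `|x n.+2 - x n.+1| <= (1 - alpha n.+1) * `|x n.+1 - x n| + M%:R * (B * stage_err n).
Proof.
near=> B; have B_ge0 : 0 <= B by near: B; exact: pinfty_ge.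
near=> n; have n_ge1 : (1 <= n)%N by near: n; exact: nbhs_infty_ge.
have w_step : forall i, (1 <= i <= M)%N ->
    `|w i.+1 n.+1 - w i.+1 n| <= (1 - alpha n.+1) * `|w i n.+1 - w i n| + B * stage_err n.
  by near: n; near: B; exact: w_step_le.
have -> : x n.+2 - x n.+1 = w M.+1 n.+1 - w M.+1 n by rewrite !x_next.
have -> : x n.+1 - x n = w 1%N n.+1 - w 1%N n by rewrite !w_first.
apply: (iter_contraction_le (D := fun i => `|w i.+1 n.+1 - w i.+1 n|)) => //.
- have /andP [a_ge0 a_le1] := alpha01 (isT : (1 <= n.+1)%N).
  by rewrite subr_ge0 a_le1 lerBlDr lerDl.
- by rewrite mulr_ge0 ?stage_err_ge0.
- by move=> i i_lt; apply: w_step; rewrite ltnS.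
Unshelve. all: by end_near.
Qed.

Let rate n := (lambda n.+1)^-1 * `|1 - alpha n / alpha n.+1|
  + 4 * (theta n / (alpha n.+1 * lambda n.+1))
  + (1 + lambda n) * ((alpha n.+1)^-1 * `|(lambda n.+1)^-1 - (lambda n)^-1|)
  + (1 + sigma) * (beta n / alpha n.+1).

Let stage_err_le_rate n : (1 <= n)%N -> stage_err n <= alpha n.+1 * lambda n.+1 * rate n.
Proof.
move=> n_ge1; have n1_ge1 : (1 <= n.+1)%N by [].
have [theta_decr _ beta_decr _] := params_decr n_ge1.
have /andP [t1_ge0 _] := theta01 n1_ge1.
apply: stage_error_le; rewrite ?alpha_gt0 ?lambda_gt0 ?lambda_ratio_le //.
  by rewrite t1_ge0.
by rewrite beta_ge0.
Qed.

Let rate_cvg0 : rate @ \oo --> 0.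
Proof.
have -> : (0 : R) = 0 + 4 * 0 + (1 + 0) * 0 + (1 + sigma) * 0 by rewrite !mulr0 !addr0.
apply: cvgD; [apply: cvgD; [apply: cvgD|] | ].
- exact: alpha_ratio_rate.
- by apply: cvgM => //; exact: cvg_cst.
- by apply: cvgM => //; apply: cvgD => //; exact: cvg_cst.
- by apply: cvgM => //; exact: cvg_cst.
Qed.

(* Xu's lemma applied to [|x_{n+1} - x_n| / lambda_n]. *)
Lemma x_step_div_cvg0 : (fun n => `|x n.+1 - x n| / lambda n) @ \oo --> 0.
Proof.
near +oo_R => Bx; have x_le : forall n, (1 <= n)%N -> `|x n| <= Bx.
  move=> n n_ge1; rewrite -w_first //; move: n {n_ge1}; near: Bx.
  by apply: filterS w_uniformly_bounded => Bx; apply.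
near +oo_R => B; have B_ge0 : 0 <= B by near: B; exact: pinfty_ge.
have x_step : \forall n \near \oo,
    `|x n.+2 - x n.+1| <= (1 - alpha n.+1) * `|x n.+1 - x n| + M%:R * (B * stage_err n).
  by near: B; exact: x_step_le.
apply: (@xu_cvg0 _ _ alpha (fun n => 2 * Bx * ((alpha n.+1)^-1 *
  `|(lambda n.+1)^-1 - (lambda n)^-1|) + M%:R * B * rate n)) => //.
  have -> : (0 : R) = 2 * Bx * 0 + M%:R * B * 0 by rewrite !mulr0 addr0.
  apply: cvgD; apply: cvgM; try exact: cvg_cst.
  - exact: lambda_inv_rate.
  - exact: rate_cvg0.
near=> n; have n_ge1 : (1 <= n)%N by near: n; exact: nbhs_infty_ge.
have x_step_n : `|x n.+2 - x n.+1| <=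
    (1 - alpha n.+1) * `|x n.+1 - x n| + M%:R * (B * stage_err n) by near: n.
have n1_ge1 : (1 <= n.+1)%N by [].
split; first by rewrite divr_ge0 // ltW ?lambda_gt0.
apply: div_step_le; [exact: lambda_gt0 | exact: lambda_gt0 | | |].
- by case/andP: (alpha01 n1_ge1) => _ ->; rewrite alpha_gt0.
- by rewrite normr_ge0 /= normrB_le_double ?x_le.
apply: le_trans x_step_n _; rewrite lerD2l.
have := ler_wpM2l (mulr_ge0 (ler0n _ M) B_ge0) (stage_err_le_rate n_ge1); lra.
Unshelve. all: by end_near.
Qed.

Lemma x_step_cvg0 : (fun n => `|x n.+1 - x n| / lambda n) @ \oo --> 0 /\
  (fun n => `|x n.+1 - x n|) @ \oo --> 0.
Proof.
have x_div_cvg0 := x_step_div_cvg0; split => //.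
apply/cvgrPdist_le => e e_gt0; near=> n; rewrite sub0r normrN normr_id.
have n_ge1 : (1 <= n)%N by near: n; exact: nbhs_infty_ge.
have lam_le1 : lambda n <= 1.
  by near: n; move: lambda_eventually_small; apply: filterS => ? [].
have : `| `|x n.+1 - x n| / lambda n| <= e by near: n; exact: cvgr0_norm_le.
have lam_gt0 := lambda_gt0 n_ge1.
rewrite ger0_norm; last by rewrite divr_ge0 // ltW.
by move=> /(le_trans _); apply; rewrite ler_pdivlMr // ler_piMr.
Unshelve. all: by end_near.
Qed.

End Algorithm.

Theorem lemma3 (R : realType) (H : completeNormedModType R)
  (inner : H -> H -> R) (M : nat)
  (f h : nat -> H -> R) (gradh : nat -> H -> H) (L : nat -> R) (T : nat -> H -> H)
  (theta lambda beta alpha : nat -> R)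
  (x : nat -> H) (w z d y : nat -> nat -> H) (u : nat -> H) :
  is_inner_product inner ->
  (0 < M)%N ->
  (* (A1) *)
  (forall i, (1 <= i <= M)%N -> continuous (f i) /\ convex_fun (f i)) ->
  (* (A2) *)
  (forall i, (1 <= i <= M)%N ->
     [/\ convex_fun (h i), frechet_gradient inner (h i) (gradh i),
         0 < L i & lipschitz_with (L i)^-1 (gradh i)]) ->
  (* (A3) *)
  (forall i, (1 <= i <= M)%N -> firmly_nonexpansive inner (T i)) ->
  (* (A4) *)
  let S := [set p : H | forall i, (1 <= i <= M)%N -> Fix (T i) p] in
  let psi := fun p : H => \sum_(1 <= i < M.+1) (f i p + h i p) in
  S !=set0 ->
  (exists2 xh : H, S xh & forall p, S p -> psi xh <= psi p) ->
  (* Condition (C): decreasing sequences (indexed from n = 1) converging to 0 *)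
  (forall n, (1 <= n)%N ->
     [/\ theta n.+1 <= theta n, lambda n.+1 <= lambda n,
         beta n.+1 <= beta n & alpha n.+1 <= alpha n]) ->
  theta @ \oo --> 0 -> lambda @ \oo --> 0 ->
  beta @ \oo --> 0 -> alpha @ \oo --> 0 ->
  (forall n, (1 <= n)%N ->
     [/\ 0 <= theta n < 1,
         0 < lambda n /\ (forall i, (1 <= i <= M)%N -> lambda n <= 2 * L i),
         0 < beta n <= 1 & 0 < alpha n <= 1]) ->
  (* (C1) *)
  (\sum_(1 <= k <oo) (alpha k)%:E = +oo)%E ->
  (* (C2) *)
  (fun n => (alpha n.+1)^-1 * `|(lambda n.+1)^-1 - (lambda n)^-1|) @ \oo --> 0 ->
  (* (C3) *)
  (fun n => (lambda n.+1)^-1 * `|1 - alpha n / alpha n.+1|) @ \oo --> 0 ->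
  (* (C4) *)
  (fun n => alpha n / lambda n) @ \oo --> 0 ->
  (* (C5) *)
  (fun n => theta n / (alpha n.+1 * lambda n.+1)) @ \oo --> 0 ->
  (* (C6) *)
  (exists2 sigma : R, 1 <= sigma &
     forall n, (1 <= n)%N -> lambda n / lambda n.+1 <= sigma) ->
  (* (C7) *)
  (fun n => beta n / alpha n.+1) @ \oo --> 0 ->
  (* the algorithm; w i 0, z i 0, u i are the initial data *)
  (forall i, (1 <= i <= M)%N -> d i 1%N = - gradh i (z i 0%N)) ->
  (forall n, (1 <= n)%N -> w 1%N n = x n) ->
  (forall n i, (1 <= n)%N -> (1 <= i <= M)%N ->
     [/\ z i n = w i n + theta n *: (w i n - w i n.-1),
         d i n.+1 = - gradh i (z i n) + beta n *: d i n,
         is_prox (lambda n) (f i) (z i n + lambda n *: d i n.+1) (y i n)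
       & w i.+1 n = alpha n *: u i + (1 - alpha n) *: T i (y i n)]) ->
  (forall n, (1 <= n)%N -> x n.+1 = w M.+1 n) ->
  (* boundedness of the sequences y^{(i)} *)
  (forall i, (1 <= i <= M)%N ->
     exists B : R, forall n, (1 <= n)%N -> `|y i n| <= B) ->
  (* (a) *)
  ((fun n => `|x n.+1 - x n| / lambda n) @ \oo --> 0 /\
   (fun n => `|x n.+1 - x n|) @ \oo --> 0) /\
  (* (b) *)
  (forall xb : H, S xb -> forall i, (1 <= i <= M)%N ->
     exists Q1 Q2 : R, [/\ 0 <= Q1, 0 <= Q2 &
       forall n, (1 <= n)%N ->
         `|w i.+1 n - xb| ^+ 2 <=
           `|w i n - xb| ^+ 2 + theta n * Q1 + alpha n * Q2
           - (1 - alpha n) * `|T i (y i n) - y i n| ^+ 2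
           - `|z i n - y i n| ^+ 2
           + 2 * lambda n * (f i xb - f i (y i n))
           + 2 * lambda n * inner (d i n.+1) (y i n - xb)]).
Proof.
move=> inner_prod M_gt0 f_cont_convex h_smooth T_firm S psi _ _ params_decr _ lambda_cvg0
  beta_cvg0 _ params_range alpha_dvg lambda_inv_rate alpha_ratio_rate _ theta_rate
  [sigma _ lambda_ratio_le] beta_rate _ w_first algorithm_step x_next y_bounded.
(* Neither (A4), (C4), [theta -> 0], [alpha -> 0] nor the initial value of [d]
   is needed. *)
have f_convex i : (1 <= i <= M)%N -> convex_fun (f i) by case/f_cont_convex.
split; first exact: (x_step_cvg0 inner_prod M_gt0 f_convex h_smooth T_firm params_decr
  lambda_cvg0 beta_cvg0 params_range alpha_dvg lambda_inv_rate alpha_ratio_rate theta_rate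
  lambda_ratio_le beta_rate w_first algorithm_step x_next y_bounded).
exact: (sqr_dist_step_le inner_prod M_gt0 f_convex T_firm params_range w_first
  algorithm_step x_next y_bounded).
Qed.
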